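(* Let $n\in\mathbb{N}$, $n\ge1$, and $\Delta,\Delta'\in\mathcal{P}_n$. Then $f^{(\Delta)}_{32,n}\neq f^{(\Delta')}_{32,n}$ if and only if there exists $i\in\mathbb{Z}_n$ such that one of the following holds: (1) $lab_\Delta((i+1,i))=lab_\Delta((i-1,i))=\oplus$ and ($lab_{\Delta'}((i+1,i))=\ominus$ or $lab_{\Delta'}((i-1,i))=\ominus$); (2) $lab_{\Delta'}((i+1,i))=lab_{\Delta'}((i-1,i))=\oplus$ and ($lab_\Delta((i+1,i))=\ominus$ or $lab_\Delta((i-1,i))=\ominus$).
   Context: Cells are indexed by $\mathbb{Z}_n=\{0,\dots,n-1\}$, indices modulo $n$. Rule $32$ has local rule $r_{32}(x_1,x_2,x_3)=x_1\wedge\neg x_2\wedge x_3$ and global function $f_{32,n}(x)_i=r_{32}(x_{i-1},x_i,x_{i+1})$. An update schedule is an ordered partition $\Delta=(\Delta_1,\dots,\Delta_k)$ of $\mathbb{Z}_n$ into nonempty blocks; $\mathcal{P}_n$ is the set of them. For a block $B$ let $f^{(B)}(x)_i=f_{32,n}(x)_i$ if $i\in B$ and $x_i$ otherwise; $f^{(\Delta)}_{32,n}=f^{(\Delta_k)}\circ\cdots\circ f^{(\Delta_1)}$. (The paper phrases the conclusion as inequality of the transition digraphs with arcs $(x,f^{(\Delta)}_{32,n}(x))$, which is equivalent to inequality of the maps.) For $u,v\in\mathbb{Z}_n$ with $u\in\Delta_a$, $v\in\Delta_b$, $lab_\Delta((u,v))=\oplus$ if $b\le a$ and $\ominus$ if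 $a<b$. *)

From mathcomp Require Import all_boot.
Set Implicit Arguments. Unset Strict Implicit. Unset Printing Implicit Defensive.

Definition config (n : nat) := {ffun 'I_n -> bool}.

Definition nxt {n} (i : 'I_n) : 'I_n := ordS i.
Definition prv {n} (i : 'I_n) : 'I_n := ord_pred i.

Definition r32 (x1 x2 x3 : bool) : bool := [&& x1, ~~ x2 & x3].

Definition f32 {n} (x : config n) : config n :=
  [ffun i => r32 (x (prv i)) (x i) (x (nxt i))].

(* An update schedule (ordered partition (D_0,...,D_{k-1}) of Z_n into nonempty
   blocks) is given by k and the surjective block-index map blk; D_j = blk^-1(j). *)
Record schedule (n : nat) := Schedule {
  sch_k : nat;
  sch_blk : 'I_n -> 'I_sch_k;
  sch_surj : forall j : 'I_sch_k, exists i : 'I_n, sch_blk i = j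
}.

Definition block_update {n : nat} (D : schedule n) (j : 'I_(sch_k D)) (x : config n)
  : config n :=
  [ffun i => if sch_blk D i == j then f32 x i else x i].

Definition f32_sched {n} (D : schedule n) (x : config n) : config n :=
  foldl (fun (y : config n) (j : 'I_(sch_k D)) => @block_update n D j y) x (enum 'I_(sch_k D)).

Inductive label := oplus | ominus.

Definition lab {n} (D : schedule n) (u v : 'I_n) : label :=
  if (sch_blk D v <= sch_blk D u)%N then oplus else ominus.

From mathcomp Require Import all_boot.

(* Under rule 32 a cell that switches on must have been 0 with both neighbours
   1, while a neighbour that switches on forces the cell itself to have been 1.
   Hence in a block-sequential update, a cell updated strictly after one of its
   neighbours always ends at 0, and any other cell ends at f32 x i.  So the
   update under D agrees with f32 on the cells whose two in-labels are oplus
   and is 0 elsewhere, and two schedules give the same map iff they have the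
   same such cells: the configuration with a single 0 at i detects a
   difference at i (for n >= 2; for n = 1 the cell is its own neighbour). *)

Definition is_oplus (l : label) : bool := if l is oplus then true else false.

Definition in_oplus {n} (D : schedule n) (i : 'I_n) : bool :=
  is_oplus (lab D (nxt i) i) && is_oplus (lab D (prv i) i).

Lemma is_oplus_lab n (D : schedule n) (u v : 'I_n) :
  is_oplus (lab D u v) = (sch_blk D v <= sch_blk D u)%N.
Proof. by rewrite /lab; case: leqP. Qed.

Lemma nxt_prv n (i : 'I_n) : nxt (prv i) = i.
Proof. exact: ord_predK. Qed.

Lemma prv_nxt n (i : 'I_n) : prv (nxt i) = i.
Proof. exact: ordSK. Qed.

Lemma f32_prv_on n (x : config n) (i : 'I_n) : f32 x (prv i) -> x i.
Proof. by rewrite /f32 ffunE nxt_prv /r32 => /and3P[_ _ ->]. Qed.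

Lemma f32_nxt_on n (x : config n) (i : 'I_n) : f32 x (nxt i) -> x i.
Proof. by rewrite /f32 ffunE prv_nxt /r32 => /and3P[-> _ _]. Qed.

Section BlockSequential.

Variables (n : nat) (D : schedule n) (x : config n).
Local Notation blk := (sch_blk D).

Definition updated_upto (m : nat) (y : config n) : Prop :=
  forall i, y i = if (blk i < m)%N then in_oplus D i && f32 x i else x i.

Lemma updated_upto_block_update (j : 'I_(sch_k D)) (y : config n) :
  updated_upto j y -> updated_upto j.+1 (block_update j y).
Proof.
move=> Hy i; rewrite /block_update ffunE ltnS leq_eqVlt.
have [ij | ne_ij] := eqVneq (blk i) j; last first.
  have -> : (nat_of_ord (blk i) == j) = false.
    by apply: contraNF ne_ij => /eqP/val_inj/eqP.
  exact: Hy.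
subst j; rewrite eqxx /= /in_oplus !is_oplus_lab.
rewrite [f32 y i]ffunE [f32 x i]ffunE /r32 !Hy ltnn.
case xi: (x i); first by rewrite !andbF.
rewrite (contraFF (@f32_prv_on _ x i)) // (contraFF (@f32_nxt_on _ x i)) //.
by case: ltnP; case: ltnP; rewrite ?andbF.
Qed.

Lemma updated_upto_foldl (s : seq 'I_(sch_k D)) (m : nat) (y : config n) :
  map val s = iota m (size s) -> updated_upto m y ->
  updated_upto (m + size s) (foldl (fun z j => block_update j z) y s).
Proof.
elim: s m y => [|j s IHs] m y /=; first by rewrite addn0.
case=> <- Hs Hy; rewrite addnS -addSn.
exact/IHs/updated_upto_block_update.
Qed.

Lemma f32_schedE (i : 'I_n) : f32_sched D x i = in_oplus D i && f32 x i.
Proof.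
have := @updated_upto_foldl (enum 'I_(sch_k D)) 0 x.
rewrite val_enum_ord size_enum_ord add0n => /(_ erefl) upd.
by rewrite /f32_sched upd // ltn_ord.
Qed.

End BlockSequential.

Lemma in_oplus_self_loop n (D : schedule n) (i : 'I_n) : prv i = i -> in_oplus D i.
Proof.
move=> prv_i; have nxt_i : nxt i = i by rewrite -{1}prv_i nxt_prv.
by rewrite /in_oplus nxt_i prv_i is_oplus_lab leqnn.
Qed.

Lemma f32_single_zero n (i : 'I_n) : prv i != i -> f32 [ffun j => j != i] i.
Proof.
move=> prv_i; have nxt_i : nxt i != i.
  by apply: contra prv_i => /eqP nxt_i; rewrite -{1}nxt_i prv_nxt.
by rewrite /f32 !ffunE /r32 prv_i nxt_i eqxx.
Qed.

Lemma f32_sched_eqP n (D D' : schedule n) :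
  (forall x : config n, f32_sched D x = f32_sched D' x) <->
  (forall i : 'I_n, in_oplus D i = in_oplus D' i).
Proof.
split=> [eqDD' i | eq_oplus x]; last first.
  by apply/ffunP=> i; rewrite !f32_schedE eq_oplus.
have [prv_i | prv_i] := eqVneq (prv i) i; first by rewrite !in_oplus_self_loop.
have := congr1 (fun y : config n => y i) (eqDD' [ffun j => j != i]).
by rewrite !f32_schedE f32_single_zero // !andbT.
Qed.

Lemma in_oplus_neq n (D D' : schedule n) (i : 'I_n) :
  in_oplus D i != in_oplus D' i <->
    (lab D (nxt i) i = oplus /\ lab D (prv i) i = oplus /\
     (lab D' (nxt i) i = ominus \/ lab D' (prv i) i = ominus)) \/
    (lab D' (nxt i) i = oplus /\ lab D' (prv i) i = oplus /\
     (lab D (nxt i) i = ominus \/ lab D (prv i) i = ominus)).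
Proof.
rewrite /in_oplus.
case: (lab D (nxt i) i); case: (lab D (prv i) i);
case: (lab D' (nxt i) i); case: (lab D' (prv i) i) => /=;
by split=> //; intuition discriminate.
Qed.

Theorem mainTheorem13 (n : nat) (Hn : (1 <= n)%N) (D D' : schedule n) :
  ~ (forall x : config n, f32_sched D x = f32_sched D' x) <->
  exists i : 'I_n,
    (lab D (nxt i) i = oplus /\ lab D (prv i) i = oplus /\
     (lab D' (nxt i) i = ominus \/ lab D' (prv i) i = ominus)) \/
    (lab D' (nxt i) i = oplus /\ lab D' (prv i) i = oplus /\
     (lab D (nxt i) i = ominus \/ lab D (prv i) i = ominus)).
Proof.
split=> [neq | [i /in_oplus_neq/eqP neq_i] /f32_sched_eqP eq_oplus]; last first.
  exact/neq_i/eq_oplus.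
have [/forallP eq_oplus | /forallPn[i /in_oplus_neq]] :=
  boolP [forall i, in_oplus D i == in_oplus D' i]; last by exists i.
by case: neq; apply/f32_sched_eqP => i; apply/eqP.
Qed.
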